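(* Let $1,2,3$ be three distinct vertices of $G$ such that the induced subgraph $G[\{1,2,3\}]$ has edge set exactly $\{12,13,23\}$, and suppose $w_{12}\le w_{13}\le w_{23}$. If the matching game $\Gamma_G$ is population monotonic, then $w_{23}\ge w_{12}+w_{13}$.
   Context: $G=(V,E;w)$ is a finite simple graph with edge weights $w:E\to\mathbb{R}$, $w_e>0$ for all $e\in E$; $w_{ij}$ denotes the weight of edge $ij$. The matching game on $G$ is the cooperative game $\Gamma_G=(N,\gamma)$ with player set $N=V$ and, for $S\subseteq N$, $\gamma(S)$ equal to the maximum weight of a matching in the induced subgraph $G[S]$ (so $\gamma(\emptyset)=0$). A population monotonic allocation scheme (PMAS) is a family $(\boldsymbol{x}_S)_{\emptyset\neq S\subseteq N}$ with $\boldsymbol{x}_S=(x_{S,i})_{i\in S}\in\mathbb{R}^S$ such that (efficiency) $\sum_{i\in S}x_{S,i}=\gamma(S)$ for every nonempty $S\subseteq N$, and (monotonicity) $x_{S,i}\le x_{T,i}$ whenever $\emptyset\ne S\subseteq T\subseteq N$ and $i\in S$. $\Gamma_G$ is called population monotonic if it admits a PMAS. *)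

From HB Require Import structures.
From mathcomp Require Import all_boot all_order all_algebra.
Set Implicit Arguments. Unset Strict Implicit. Unset Printing Implicit Defensive.
Import Order.TTheory GRing.Theory Num.Theory.
Local Open Scope ring_scope.

(* A finite simple graph on vertex type V: its edge set E is a set of
   2-element subsets of V.  Edge weights are a function w on {set V};
   only its values on edges matter; w_{ij} is w [set i; j]. *)
Definition simple_graph (V : finType) (E : {set {set V}}) : Prop :=
  forall f, f \in E -> #|f| = 2%N.

Definition positive_weights (R : realFieldType) (V : finType)
  (E : {set {set V}}) (w : {set V} -> R) : Prop :=
  forall f, f \in E -> 0 < w f.

Definition is_matching (V : finType) (E : {set {set V}}) (S : {set V})
  (M : {set {set V}}) : bool :=
  [&& M \subset E, [forall f in M, f \subset S] & trivIset M].

(* gamma(S): maximum weight of a matching in G[S] (the empty matching has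
   weight 0, so the max with initial value 0 is the true maximum). *)
Definition gamma (R : realFieldType) (V : finType) (E : {set {set V}})
  (w : {set V} -> R) (S : {set V}) : R :=
  \big[Num.max/0]_(M : {set {set V}} | is_matching E S M) \sum_(f in M) w f.

(* Population monotonic allocation scheme: x S i is x_{S,i}
   (only meaningful for i in S). *)
Definition is_PMAS (R : realFieldType) (V : finType) (E : {set {set V}})
  (w : {set V} -> R) (x : {set V} -> V -> R) : Prop :=
  (forall S : {set V}, S != set0 -> \sum_(i in S) x S i = gamma E w S) /\
  (forall (S T : {set V}) (i : V), S != set0 -> S \subset T -> i \in S ->
      x S i <= x T i).

Definition population_monotonic (R : realFieldType) (V : finType)
  (E : {set {set V}}) (w : {set V} -> R) : Prop :=
  exists x : {set V} -> V -> R, is_PMAS E w x.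

From HB Require Import structures.
From mathcomp Require Import all_boot all_order all_algebra.
From mathcomp Require Import lra zify.
Import Order.TTheory GRing.Theory Num.Theory.
Local Open Scope ring_scope.

(* A population monotonic triangle is "dominated" by its heaviest edge.
   Write a, b, c for the weights of the edges 12, 13, 23 and T = {1,2,3}.

   - Any matching of a simple graph inside S covers 2|M| <= |S| vertices, so
     in the triangle T a matching has at most one edge and gamma(T) <= c.
   - For an edge ij inside T, efficiency on {i,j} and monotonicity give
     w_ij <= gamma({i,j}) = x_{ij,i} + x_{ij,j} <= x_{T,i} + x_{T,j}.
   - Adding these three inequalities,
       a + b + c <= 2 (x_{T,1} + x_{T,2} + x_{T,3}) = 2 gamma(T) <= 2 c,
     which is the claim a + b <= c. *)

Section MatchingGame.

Context {R : realFieldType} {V : finType} {E : {set {set V}}}.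
Context {w : {set V} -> R}.

(* Every edge of G[S] is itself a matching, so its weight is below gamma S. *)
Lemma gamma_ge_edge {S e : {set V}} :
  e \in E -> e \subset S -> w e <= gamma E w S.
Proof.
move=> eE eS; rewrite /gamma.
have -> : w e = \sum_(f in [set e]) w f by rewrite big_set1.
apply: (le_bigmax_cond _ (P := fun M => is_matching E S M)
          (fun M => \sum_(f in M) w f)).
rewrite /is_matching sub1set eE trivIset1 andbT /=.
by apply/forall_inP => f; rewrite inE => /eqP ->.
Qed.

Lemma matching_card {M : {set {set V}}} {T : {set V}} :
  simple_graph E -> is_matching E T M -> (2 * #|M| <= #|T|)%N.
Proof.
move=> sgE /and3P [ME /forall_inP MT]; rewrite /trivIset => /eqP tM.
have -> : (2 * #|M| = \sum_(f in M) #|f|)%N.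
  rewrite (eq_bigr (fun _ => 2%N)) => [|f fM]; last exact/sgE/(subsetP ME).
  by rewrite sum_nat_const mulnC.
rewrite tM; apply: subset_leq_card.
by apply/bigcupsP => f /MT.
Qed.

(* In a set of at most three vertices a matching has at most one edge, hence
   gamma is bounded by any nonnegative bound on the weights of its edges. *)
Lemma gamma_le_small (S : {set V}) (m : R) :
  simple_graph E -> (#|S| <= 3)%N -> 0 <= m ->
  (forall f, f \in E -> f \subset S -> w f <= m) -> gamma E w S <= m.
Proof.
move=> sgE cardS m0 wS; apply/bigmax_leP; split=> // M matM.
have cardM : (#|M| <= 1)%N.
  by have := leq_trans (matching_card sgE matM) cardS; lia.
move: cardM matM; rewrite leq_eqVlt ltnS leqn0 cards_eq0.
case/orP=> [/cards1P [f ->] | /eqP ->]; last by rewrite big_set0.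
case/and3P=> [ME /forall_inP MS _]; have fM := set11 f.
by rewrite big_set1; apply: wS; [apply: (subsetP ME) | apply: MS].
Qed.

Lemma pmas_edge_le {x : {set V} -> V -> R} {T : {set V}} {i j : V} :
  is_PMAS E w x -> i != j -> [set i; j] \in E -> i \in T -> j \in T ->
  w [set i; j] <= x T i + x T j.
Proof.
move=> [eff mon] ij eE iT jT.
have ne : [set i; j] != set0 by apply/set0Pn; exists i; rewrite !inE eqxx.
have sT : [set i; j] \subset T by apply/subsetP => z /set2P [] ->.
apply: (le_trans (gamma_ge_edge eE (subxx _))).
rewrite -eff // big_setU1 ?big_set1 /= ?inE //.
by apply: lerD; apply: mon => //; rewrite !inE eqxx ?orbT.
Qed.

End MatchingGame.

Lemma pair_in_triple {V : finType} {u v z : V} {f : {set V}} :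
  #|f| = 2%N -> f \subset [set u; v; z] ->
  [\/ f = [set u; v], f = [set u; z] | f = [set v; z]].
Proof.
move/eqP/cards2P => [p [q [pq ->]]] /subsetP fS.
have /fS pS : p \in [set p; q] by rewrite !inE eqxx.
have /fS qS : q \in [set p; q] by rewrite !inE eqxx orbT.
move: pS qS pq; rewrite !inE.
move=> /orP [/orP [] | ] /eqP -> /orP [/orP [] | ] /eqP -> ne;
  rewrite ?eqxx // in ne; rewrite 1?[[set _; u]]setUC 1?[[set z; v]]setUC;
  by [constructor 1 | constructor 2 | constructor 3].
Qed.

Lemma big_triple (R : nmodType) (V : finType) (F : V -> R) (u v z : V) :
  u != v -> u != z -> v != z ->
  \sum_(i in [set u; v; z]) F i = F u + F v + F z.
Proof.
move=> uv uz vz; rewrite setUC big_setU1 ?big_setU1 ?big_set1 /=.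
- by rewrite addrC.
- by rewrite in_set1.
- by rewrite !inE negb_or ![z == _]eq_sym uz vz.
Qed.

Theorem mainTheorem1 (R : realFieldType) (V : finType) (E : {set {set V}})
  (w : {set V} -> R) (v1 v2 v3 : V) :
  simple_graph E -> positive_weights E w ->
  v1 != v2 -> v1 != v3 -> v2 != v3 ->
  [set v1; v2] \in E -> [set v1; v3] \in E -> [set v2; v3] \in E ->
  w [set v1; v2] <= w [set v1; v3] -> w [set v1; v3] <= w [set v2; v3] ->
  population_monotonic E w ->
  w [set v1; v2] + w [set v1; v3] <= w [set v2; v3].
Proof.
move=> sgE pw n12 n13 n23 e12 e13 e23 hab hbc [x pmas].
set T := [set v1; v2; v3].
have [in1 in2 in3] : [/\ v1 \in T, v2 \in T & v3 \in T] by rewrite !inE !eqxx ?orbT.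
have gammaT : gamma E w T <= w [set v2; v3].
  apply: gamma_le_small => //.
  - by rewrite /T setUC cardsU1 cards2; case: (_ \notin _); case: (_ != _).
  - exact/ltW/pw.
  move=> f fE /(pair_in_triple (sgE f fE)) [] ->; lra.
have T0 : T != set0 by apply/set0Pn; exists v1.
have := pmas.1 T T0; rewrite big_triple //.
have := pmas_edge_le pmas n12 e12 in1 in2.
have := pmas_edge_le pmas n13 e13 in1 in3.
have := pmas_edge_le pmas n23 e23 in2 in3.
lra.
Qed.
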